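(* Let $G=(V,E)$ be a finite connected directed graph with $(i,j)\in E$ if and only if $(j,i)\in E$, and write $\partial i=\{j\in V:(j,i)\in E\}$. Let $q,q^*:V\to\mathbb{R}$ and let $\phi,\phi^*:E\to\mathbb{R}$ be skew-symmetric ($\phi_{ij}=-\phi_{ji}$, $\phi^*_{ij}=-\phi^*_{ji}$) with $\sum_{j\in\partial i}\phi_{ji}+q_i=0$ and $\sum_{j\in\partial i}\phi^*_{ji}+q^*_i=0$ for all $i\in V$. Let $T\subset V$ be non-empty. If $q_i\ge q_i^*$ for all $i\in V\setminus T$, then for every node $u\in V\setminus T$ there exists a non-intersecting directed path $(i_1,\ldots,i_n)$ in $G$ with $i_1\in T$, $i_n=u$ and $\phi^*_{i_li_{l+1}}\ge\phi_{i_li_{l+1}}$ for all $l=1,\ldots,n-1$. Moreover, if $q_u>q_u^*$, the path can be chosen so that $\phi^*_{i_li_{l+1}}>\phi_{i_li_{l+1}}$ for all $l=1,\ldots,n-1$.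
   Context: A non-intersecting directed path is a sequence of pairwise distinct nodes $(i_1,\ldots,i_n)$ with $(i_l,i_{l+1})\in E$ for each $l$. *)

From HB Require Import structures.
From mathcomp Require Import all_boot all_order all_algebra.
Set Implicit Arguments. Unset Strict Implicit. Unset Printing Implicit Defensive.
Import Order.TTheory GRing.Theory Num.Theory.
Local Open Scope ring_scope.

(* A non-intersecting directed path
   (i_1, ..., i_n) is represented as i_1 :: p with
   - uniq (i_1 :: p)            (pairwise distinct nodes),
   - path E' i_1 p              (consecutive pairs satisfy E'),
   where E' additionally encodes the comparison condition on the flows. *)

Definition ni_path_from_to (V : finType) (E : rel V) (cond : rel V)
    (T : {set V}) (u : V) : Prop :=
  exists (i1 : V) (p : seq V),
    [/\ i1 \in T, uniq (i1 :: p), last i1 p = u &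
        path (fun a b => E a b && cond a b) i1 p].

(* Put psi := phis - phi, a skew-symmetric flow whose net inflow at i is
   q_i - qs_i, nonnegative off T.  If u could not be reached from T along edges
   on which psi is large enough, let U be the set of unreachable nodes: it
   contains u, misses T, and every edge entering U carries a small psi.  By
   skew-symmetry the total inflow into U is the flow across its boundary, so
   it is at most 0, strictly negative when some edge enters U (which happens
   in the weak case by connectivity).  This contradicts the inflow into U
   being nonnegative, and positive in the strict case since u is in U. *)

From HB Require Import structures.
From mathcomp Require Import all_boot all_order all_algebra.
From mathcomp Require Import lra.
Set Implicit Arguments.
Unset Strict Implicit.
Unset Printing Implicit Defensive.

Import Order.TTheory GRing.Theory Num.Theory.
Local Open Scope ring_scope.

Lemma sumr_lt0 (R : numDomainType) (I : finType) (P : pred I) (F : I -> R) i :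
  P i -> F i < 0 -> (forall j, P j -> F j <= 0) -> \sum_(j | P j) F j < 0.
Proof.
move=> Pi Fi_lt0 F_le0; rewrite (bigD1 i) //= -[X in _ < X]addr0 ltr_leD //.
by apply: sumr_le0 => j /andP[Pj _]; exact: F_le0.
Qed.

Section Reachability.
Variable V : finType.

Definition reach (e : rel V) (T : {set V}) : {set V} :=
  [set v | [exists t in T, connect e t v]].

Lemma eq_reach (e e' : rel V) (T : {set V}) : e =2 e' -> reach e T = reach e' T.
Proof.
move=> ee'; apply/setP => v; rewrite !inE.
by under eq_existsb do rewrite (eq_connect ee').
Qed.

Lemma sub_reach (e : rel V) (T : {set V}) : T \subset reach e T.
Proof.
by apply/subsetP => t tT; rewrite inE; apply/exists_inP; exists t; rewrite ?connect0.
Qed.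

Lemma reach_edge (e : rel V) (T : {set V}) j i :
  j \in reach e T -> e j i -> i \in reach e T.
Proof.
rewrite !inE => /exists_inP[t tT ctj] eji; apply/exists_inP; exists t => //.
exact: connect_trans ctj (connect1 eji).
Qed.

Lemma ni_pathP (E cond : rel V) (T : {set V}) u :
  reflect (ni_path_from_to E cond T u)
          (u \in reach (fun a b => E a b && cond a b) T).
Proof.
rewrite inE; apply: (iffP exists_inP) => [[t tT /connectP[p p_path ->]] | ].
  by case: (shortenP p_path) => p' p'_path p'_uniq _; exists t, p'.
by case=> t [p [tT _ <- p_path]]; exists t => //; apply/connectP; exists p.
Qed.

Lemma connect_cross (e : rel V) (U : {set V}) x y :
  connect e x y -> x \notin U -> y \in U ->
  exists j i, [/\ j \notin U, i \in U & e j i].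
Proof.
case/connectP=> p + ->; elim: p x => [|z p IHp] x /=; first by move=> _ /negP.
case/andP=> exz zp xU; case: (boolP (z \in U)) => [zU _ | /IHp]; last exact.
by exists x, z.
Qed.

End Reachability.

Section CutFlow.
Variables (R : realDomainType) (V : finType) (E : rel V).
Hypothesis Esym : forall i j, E i j = E j i.
Variable psi : V -> V -> R.
Hypothesis psi_skew : forall i j, E i j -> psi i j = - psi j i.

Definition inflow i := \sum_(j | E j i) psi j i.

Lemma inner_flow_eq0 (U : {set V}) :
  \sum_(i in U) \sum_(j | E j i && (j \in U)) psi j i = 0.
Proof.
set A := LHS; suff: A = - A.
  by move=> A_oppA; apply/eqP; rewrite -[A == 0](mulrn_eq0 _ 2) mulr2n {2}A_oppA subrr.
rewrite {1}/A (exchange_big_dep (mem U)) /=; last by move=> i j _ /andP[].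
rewrite -sumrN; apply: eq_bigr => i iU; rewrite -sumrN.
apply: eq_big => [j | j /andP[jU /andP[Eij _]]]; last exact: psi_skew.
by rewrite Esym iU andbT andbC.
Qed.

Lemma inflow_cut (U : {set V}) :
  \sum_(i in U) inflow i =
  \sum_(i in U) \sum_(j | E j i && (j \notin U)) psi j i.
Proof.
under eq_bigr do rewrite /inflow (bigID (mem U)) /=.
by rewrite big_split /= inner_flow_eq0 add0r.
Qed.

Variable T : {set V}.
Hypothesis inflow_ge0 : forall i, i \notin T -> 0 <= inflow i.

Lemma unreached_inflow_ge0 (e : rel V) i :
  i \in ~: reach e T -> 0 <= inflow i.
Proof.
rewrite in_setC => iNr; apply: inflow_ge0.
by apply: contra iNr; apply/subsetP/sub_reach.
Qed.

Lemma reach_flow_ge0 u :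
  (forall i j, connect E i j) -> T != set0 ->
  u \in reach (fun a b => E a b && (0 <= psi a b)) T.
Proof.
move=> Econn /set0Pn[t tT]; set e := fun a b => _.
apply: contraT => uNr; set U := ~: reach e T.
have tNU : t \notin U by rewrite in_setC negbK (subsetP (sub_reach _ _)).
have uU : u \in U by rewrite in_setC.
have cross_lt0 j i : j \notin U -> i \in U -> E j i -> psi j i < 0.
  rewrite !in_setC negbK => jr iNr Eji; rewrite ltNge.
  by apply: contra iNr => psi_ge0; apply: reach_edge jr _; rewrite /e Eji.
have [j [i [jU iU Eji]]] := connect_cross (Econn t u) tNU uU.
have : 0 <= \sum_(k in U) inflow k.
  by apply: sumr_ge0 => k; exact: unreached_inflow_ge0.
rewrite inflow_cut leNgt => /negbTE <-.
apply: (sumr_lt0 iU) => [|k kU].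
  apply: (@sumr_lt0 _ _ _ _ j) => [|| l /andP[Eli lU]]; first by rewrite Eji.
    exact: cross_lt0.
  exact/ltW/cross_lt0.
by apply: sumr_le0 => l /andP[Elk lU]; apply/ltW/cross_lt0.
Qed.

Lemma reach_flow_gt0 u :
  0 < inflow u -> u \in reach (fun a b => E a b && (0 < psi a b)) T.
Proof.
move=> inflow_u_gt0; set e := fun a b => _.
apply: contraT => uNr; set U := ~: reach e T.
have uU : u \in U by rewrite in_setC.
have cross_le0 j i : j \notin U -> i \in U -> E j i -> psi j i <= 0.
  rewrite !in_setC negbK => jr iNr Eji; rewrite leNgt.
  by apply: contra iNr => psi_gt0; apply: reach_edge jr _; rewrite /e Eji.
have : 0 < \sum_(i in U) inflow i.
  rewrite (bigD1 u) //= -[X in X < _]addr0 ltr_leD //.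
  by apply: sumr_ge0 => i /andP[iU _]; exact: unreached_inflow_ge0 iU.
rewrite inflow_cut ltNge => /negbTE <-.
by apply: sumr_le0 => i iU; apply: sumr_le0 => j /andP[Eji jU]; exact: cross_le0.
Qed.

End CutFlow.

Theorem theorem3 (R : realFieldType) (V : finType) (E : rel V)
  (Esym : forall i j, E i j = E j i)
  (Econn : forall i j, connect E i j)
  (q qs : V -> R) (phi phis : V -> V -> R)
  (phi_skew : forall i j, E i j -> phi i j = - phi j i)
  (phis_skew : forall i j, E i j -> phis i j = - phis j i)
  (phi_bal : forall i, \sum_(j | E j i) phi j i + q i = 0)
  (phis_bal : forall i, \sum_(j | E j i) phis j i + qs i = 0)
  (T : {set V}) (T_nonempty : T != set0)
  (hq : forall i, i \notin T -> qs i <= q i) :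
  forall u, u \notin T ->
    ni_path_from_to E (fun a b => phi a b <= phis a b) T u /\
    (qs u < q u -> ni_path_from_to E (fun a b => phi a b < phis a b) T u).
Proof.
move=> u _; pose psi a b := phis a b - phi a b.
have psi_skew i j : E i j -> psi i j = - psi j i.
  by move=> Eij; rewrite /psi (phi_skew _ _ Eij) (phis_skew _ _ Eij) opprB opprK addrC.
have inflow_psi i : inflow E psi i = q i - qs i.
  by have := phi_bal i; have := phis_bal i; rewrite /inflow sumrB; lra.
have inflow_ge0 i : i \notin T -> 0 <= inflow E psi i.
  by rewrite inflow_psi subr_ge0; exact: hq.
split=> [|qs_lt_q]; apply/ni_pathP.
  rewrite (@eq_reach _ _ (fun a b => E a b && (0 <= psi a b))) => [|a b].
    exact: reach_flow_ge0.
  by rewrite subr_ge0.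
rewrite (@eq_reach _ _ (fun a b => E a b && (0 < psi a b))) => [|a b].
  by apply: reach_flow_gt0; rewrite ?inflow_psi ?subr_gt0.
by rewrite subr_gt0.
Qed.
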